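(* For every $k\ge 0$, as formal power series in $z$, $$\sum_{n\ge 0} e(n,n-k)z^n=\frac{z^k}{(1-z)^{2\lfloor\frac{k+1}{2}\rfloor+1}(1+z^2)^{\lfloor\frac{k}{2}\rfloor+1}}\,L_{k+2}(-z).$$
   Context: $e(n,j)$ is the number of $j$-element subsets of $\{1,\dots,n\}$ with even sum (the empty set counts as even; $e(n,j)=0$ for $j<0$). Losanitsch's triangle $(L(n,k))$ is defined by $L(0,k)=[k=0]$, $L(1,k)=[k\le 1]$ for $k\ge0$, $L(n,k)=0$ for $k<0$, and for $n\ge 2$: $L(n,k)=L(n-2,k)+\binom{n-2}{k-1}+L(n-2,k-2)$ (with $\binom{m}{j}=0$ for $j<0$ or $j>m$). The Losanitsch polynomials are $L_n(x)=\sum_{k=0}^n L(n,k)x^k$. *)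

From HB Require Import structures.
From mathcomp Require Import all_boot all_order all_algebra.
Set Implicit Arguments. Unset Strict Implicit. Unset Printing Implicit Defensive.
Import Order.TTheory GRing.Theory Num.Theory.
Local Open Scope ring_scope.

(* e(n,j): number of j-element subsets of {1,...,n} with even sum.
   The element i : 'I_n represents the integer i+1. e(n,j) = 0 for j < 0. *)
Definition e_even (n : nat) (j : int) : nat :=
  match j with
  | Posz j' => #|[set A : {set 'I_n} |
                   (#|A| == j')%N && ~~ odd (\sum_(i in A) i.+1)%N]|
  | Negz _ => 0%N
  end.

Fixpoint Los (n k : nat) {struct n} : nat :=
  match n with
  | 0 => nat_of_bool (k == 0)%N
  | 1 => nat_of_bool (k <= 1)%N
  | n'.+2 => (Los n' k
              + (if k is k'.+1 then 'C(n', k') else 0)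
              + (if k is k'.+2 then Los n' k' else 0))%N
  end.

Definition LosPoly (n : nat) : {poly rat} :=
  \sum_(k < n.+1) (Los n k)%:R *: 'X^k.

Definition fps := nat -> rat.

Definition fps_of_poly (p : {poly rat}) : fps := fun n => p`_n.

Definition fps_mul (f g : fps) : fps :=
  fun n => \sum_(i < n.+1) f i * g (n - i)%N.

(* The first n+1 coefficients of the multiplicative inverse of f
   (meaningful when f 0 != 0). *)
Fixpoint inv_seq (f : fps) (n : nat) : seq rat :=
  match n with
  | 0 => [:: (f 0%N)^-1]
  | m.+1 => let s := inv_seq f m in
            rcons s (- (f 0%N)^-1 * \sum_(i < m.+1) f i.+1 * nth 0 s (m - i)%N)
  end.

Definition fps_inv (f : fps) : fps := fun n => nth 0 (inv_seq f n) n.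

(* Split e(n, j) = (C(n, j) + s(n, j)) / 2, where s(n, j) sums (-1)^(sum of J)
   over the j-subsets J of {1, ..., n}.  The numbers s(n, n - k) are the
   coefficients of X^k in prod_(i = 1..n) (X + (-1)^i), a product which gains
   the factor X^2 - 1 when n grows by 2; hence their generating series in n is
   z^k (1 - z)^[k even] / (1 + z^2)^(floor(k/2) + 1), while that of C(n, k) is
   z^k / (1 - z)^(k + 1).  Summing the two series and comparing with the closed
   form 2 L_n(x) = (1 + x)^n + (1 + x^2)^floor(n/2) (1 + x)^(n mod 2) of the
   Losanitsch polynomials gives the identity.  Power series identities are
   checked modulo X^(N+1), on polynomial truncations, for every N. *)

From HB Require Import structures.
From mathcomp Require Import all_boot all_order all_algebra.
From mathcomp Require Import ring zify.
From Stdlib Require Import FunctionalExtensionality.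
Import Order.TTheory GRing.Theory Num.Theory.
Local Open Scope ring_scope.
Set Implicit Arguments. Unset Strict Implicit. Unset Printing Implicit Defensive.

Lemma nat_ind2 (P : nat -> Prop) :
  P 0%N -> P 1%N -> (forall n, P n -> P n.+2) -> forall n, P n.
Proof.
move=> P0 P1 PSS n; suff : P n /\ P n.+1 by case.
by elim: n => [|n [Pn PSn]]; split=> //; apply: PSS.
Qed.

Section EqUpto.

Variable R : nzRingType.
Implicit Types p q r s : {poly R}.

Definition eq_upto N p q := forall j, (j <= N)%N -> p`_j = q`_j.

Lemma eq_upto_trans N p q r : eq_upto N p q -> eq_upto N q r -> eq_upto N p r.
Proof. by move=> epq eqr j jN; rewrite epq ?eqr. Qed.

Lemma eq_uptoD N p q r s : eq_upto N p q -> eq_upto N r s -> eq_upto N (p + r) (q + s).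
Proof. by move=> epq ers j jN; rewrite !coefD epq ?ers. Qed.

Lemma eq_uptoM N p q r s : eq_upto N p q -> eq_upto N r s -> eq_upto N (p * r) (q * s).
Proof.
move=> epq ers j jN; rewrite !coefM; apply: eq_bigr => -[i /= ij] _.
by rewrite epq ?ers //; lia.
Qed.

Lemma eq_uptoMl N p q r : eq_upto N p q -> eq_upto N (r * p) (r * q).
Proof. exact: eq_uptoM. Qed.

Lemma eq_uptoMr N p q r : eq_upto N p q -> eq_upto N (p * r) (q * r).
Proof. by move/eq_uptoM; apply. Qed.

End EqUpto.

Definition trunc N (f : fps) : {poly rat} := \poly_(i < N.+1) f i.

Lemma coef_trunc N f j : (j <= N)%N -> (trunc N f)`_j = f j.
Proof. by move=> jN; rewrite coef_poly ltnS jN. Qed.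

Lemma trunc0 N : trunc N (fun=> 0) = 0.
Proof. by apply/polyP => i; rewrite coef_poly coef0 if_same. Qed.

Lemma eq_upto_trunc_poly N (p : {poly rat}) : eq_upto N (trunc N (fps_of_poly p)) p.
Proof. exact: coef_trunc. Qed.

Lemma fps_mul_trunc N f g j :
  (j <= N)%N -> fps_mul f g j = (trunc N f * trunc N g)`_j.
Proof.
move=> jN; rewrite coefM; apply: eq_bigr => -[i /= ij] _.
by rewrite !coef_trunc //; lia.
Qed.

Lemma eq_upto_trunc_mul N f g :
  eq_upto N (trunc N (fps_mul f g)) (trunc N f * trunc N g).
Proof. by move=> j jN; rewrite coef_trunc // (fps_mul_trunc _ _ jN). Qed.

Lemma size_inv_seq f n : size (inv_seq f n) = n.+1.
Proof. by elim: n => //= n IHn; rewrite size_rcons IHn. Qed.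

Lemma nth_inv_seq f n i : (i <= n)%N -> nth 0 (inv_seq f n) i = fps_inv f i.
Proof.
elim: n => [|n IHn]; first by rewrite leqn0 => /eqP ->.
rewrite leq_eqVlt => /predU1P[-> //|ilt].
by rewrite /= nth_rcons size_inv_seq ilt IHn.
Qed.

Lemma fps_invS f n :
  fps_inv f n.+1 = - (f 0%N)^-1 * \sum_(i < n.+1) f i.+1 * fps_inv f (n - i)%N.
Proof.
rewrite {1}/fps_inv /= nth_rcons size_inv_seq ltnn eqxx.
by congr (_ * _); apply: eq_bigr => i _; rewrite nth_inv_seq ?leq_subr.
Qed.

Lemma fps_mul_inv f n : f 0%N != 0 -> fps_mul f (fps_inv f) n = (n == 0)%:R.
Proof.
move=> f0; case: n => [|n]; first by rewrite /fps_mul big_ord1 /fps_inv /= mulfV.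
rewrite /fps_mul big_ord_recl subn0 fps_invS mulrA mulrN mulfV // mulN1r.
by under [X in _ + X]eq_bigr do rewrite lift0 subSS; rewrite addNr.
Qed.

Lemma eq_upto_mul_inv N (p : {poly rat}) :
  p`_0 != 0 -> eq_upto N (p * trunc N (fps_inv (fps_of_poly p))) 1.
Proof.
move=> p0 j jN; rewrite -(eq_uptoMr _ (eq_upto_trunc_poly p) jN).
by rewrite -fps_mul_trunc // fps_mul_inv // coef1.
Qed.

Lemma fps_eq_mul_inv2 (F : fps) (P A B : {poly rat}) :
  A`_0 != 0 -> B`_0 != 0 -> (forall N, eq_upto N (trunc N F * A * B) P) ->
  F = fps_mul (fps_of_poly P)
        (fps_mul (fps_inv (fps_of_poly A)) (fps_inv (fps_of_poly B))).
Proof.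
move=> A0 B0 FAB; apply: functional_extensionality => n.
have nn := leqnn n.
rewrite (fps_mul_trunc _ _ nn).
rewrite (eq_uptoM (eq_upto_trunc_poly P) (eq_upto_trunc_mul _ _) nn).
rewrite -(eq_uptoMr _ (FAB n) nn).
set iA := trunc n (fps_inv (fps_of_poly A)); set iB := trunc n (fps_inv (fps_of_poly B)).
rewrite (_ : trunc n F * A * B * (iA * iB) = trunc n F * (A * iA) * (B * iB)); last by ring.
rewrite (eq_uptoM (eq_uptoMl _ (eq_upto_mul_inv A0)) (eq_upto_mul_inv B0) nn).
by rewrite !mulr1 coef_trunc.
Qed.

Lemma eq_upto_trunc_mul_1subX N (f g : fps) :
  (forall n, f n.+1 - f n = g n) ->
  eq_upto N (trunc N f * (1 - 'X)) ((f 0%N)%:P + 'X * trunc N g).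
Proof.
move=> fg [|j] jN; rewrite mulrBr mulr1 coefB coefMX coefD coefC coefXM /=.
  by rewrite coef_trunc // !subr0 addr0.
by rewrite add0r !coef_trunc ?fg //; lia.
Qed.

Lemma eq_upto_trunc_mul_1addX2 N (f g : fps) :
  (forall n, f n.+2 + f n = g n) ->
  eq_upto N (trunc N f * (1 + 'X^2))
    ((f 0%N)%:P + (f 1%N)%:P * 'X + 'X^2 * trunc N g).
Proof.
move=> fg [|[|j]] jN; rewrite mulrDr mulr1 !coefD coefMXn coefC coefCM coefX coefXnM /=.
- by rewrite coef_trunc // mulr0 !addr0.
- by rewrite coef_trunc // mulr1 !addr0 add0r.
by rewrite mulr0 !add0r subn2 !coef_trunc ?fg //; lia.
Qed.

Lemma eq_upto_binomial_gf N k :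
  eq_upto N (trunc N (fun n => 'C(n, k)%:R) * (1 - 'X) ^+ k.+1) 'X^k.
Proof.
elim: k => [|k IHk].
  have dif n : 'C(n.+1, 0)%:R - 'C(n, 0)%:R = (fun=> 0 : rat) n by rewrite !bin0 subrr.
  apply: eq_upto_trans (eq_upto_trunc_mul_1subX dif) _.
  by rewrite trunc0 mulr0 addr0 bin0.
have dif n : 'C(n.+1, k.+1)%:R - 'C(n, k.+1)%:R = (fun n => 'C(n, k)%:R : rat) n.
  by rewrite binS natrD addrC addKr.
rewrite exprS mulrA; apply: eq_upto_trans (eq_uptoMr _ (eq_upto_trunc_mul_1subX dif)) _.
by rewrite bin0n polyC0 add0r -mulrA [X in eq_upto _ _ X]exprS; apply: eq_uptoMl.
Qed.

Definition alt_prod n : {poly rat} := \prod_(i < n) ('X + ((-1) ^+ i.+1)%:P).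

Lemma alt_prodSS n : alt_prod n.+2 = alt_prod n * ('X^2 - 1).
Proof.
rewrite /alt_prod !big_ord_recr /= -mulrA; congr (_ * _).
rewrite [(-1) ^+ n.+2]exprS mulN1r polyCN.
have sq1 : ((-1) ^+ n.+1 : rat)%:P ^+ 2 = 1 by rewrite -rmorphXn /= sqrr_sign.
by rewrite -sq1; ring.
Qed.

Lemma coef_alt_prodSS n k :
  (alt_prod n.+2)`_k + (alt_prod n)`_k = ('X^2 * alt_prod n)`_k.
Proof. by rewrite -coefD alt_prodSS mulrBr mulr1 subrK mulrC. Qed.

Lemma eq_upto_alt_gf N k :
  eq_upto N (trunc N (fun n => (alt_prod n)`_k) * (1 + 'X^2) ^+ (k./2).+1)
    ('X^k * (1 - 'X) ^+ (~~ odd k)).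
Proof.
have alt0 : alt_prod 0 = 1 by rewrite /alt_prod big_ord0.
have alt1 : alt_prod 1 = 'X - 1 by rewrite /alt_prod big_ord1 expr1 polyCN.
have low j : (j < 2)%N ->
    forall n, (alt_prod n.+2)`_j + (alt_prod n)`_j = (fun=> 0 : rat) n.
  by move=> j2 n; rewrite coef_alt_prodSS coefXnM j2.
elim/nat_ind2: k => [||k IHk] /=.
- apply: eq_upto_trans (eq_upto_trunc_mul_1addX2 (low 0%N isT)) _.
  rewrite trunc0 alt0 alt1 coef1 coefB coefX coef1 mulr0 addr0 /=.
  by rewrite sub0r polyCN mulN1r expr0 mul1r expr1.
- rewrite expr1; apply: eq_upto_trans (eq_upto_trunc_mul_1addX2 (low 1%N isT)) _.
  rewrite trunc0 alt0 alt1 coef1 coefB coefX coef1 mulr0 addr0 /=.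
  by rewrite polyC0 add0r subr0 mul1r expr0 mulr1 expr1.
have dif n : (alt_prod n.+2)`_k.+2 + (alt_prod n)`_k.+2 = (fun n => (alt_prod n)`_k) n.
  by rewrite coef_alt_prodSS coefXnM subn2.
rewrite exprS mulrA; apply: eq_upto_trans (eq_uptoMr _ (eq_upto_trunc_mul_1addX2 dif)) _.
rewrite alt0 alt1 coef1 coefB coefX coef1 subr0 polyC0 mul0r !add0r negbK -mulrA.
by rewrite -[k.+2]add2n exprD -mulrA; apply: eq_uptoMl.
Qed.

Lemma coef_prod_XaddC (R : comNzRingType) n (c : 'I_n -> R) k :
  (\prod_(i < n) ('X + (c i)%:P))`_k =
  \sum_(J : {set 'I_n} | (#|J| + k == n)%N) \prod_(i in J) c i.
Proof.
under eq_bigr do rewrite addrC.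
rewrite bigA_distr coef_sum [RHS]big_mkcond; apply: eq_bigr => J _.
rewrite big_if /= prodr_const -rmorph_prod coefCM coefXn.
have cardJC : (#|J| + #|(fun i : 'I_n => i \notin J)| = n)%N.
  by have := cardC J; rewrite card_ord.
rewrite -(eqn_add2l #|J|) cardJC eq_sym.
by case: ifP; rewrite ?mulr1 ?mulr0.
Qed.

Lemma e_even_sum_sign n (j : nat) :
  (e_even n j)%:R * 2 =
  'C(n, j)%:R + \sum_(J : {set 'I_n} | #|J| == j) (-1) ^+ (\sum_(i in J) i.+1)%N :> rat.
Proof.
have := card_draws 'I_n j; rewrite card_ord => <-.
rewrite /e_even -!sum1_card !natr_sum !big_set /=.
rewrite big_mkcondr mulr_suml -big_split; apply: eq_bigr => J _ /=.
by rewrite -signr_odd; case: odd; rewrite /= ?mul0r ?mul1r ?expr0 ?expr1 ?addrN.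
Qed.

Lemma e_even_alt_prod n k :
  (e_even n (n%:Z - k%:Z))%:R = 2^-1 * ('C(n, k)%:R + (alt_prod n)`_k) :> rat.
Proof.
rewrite /alt_prod coef_prod_XaddC.
have [kn|nk] := leqP k n; last first.
  rewrite big_pred0 => [|J]; last by apply/negbTE; lia.
  have -> : n%:Z - k%:Z = Negz (k - n).-1 by rewrite NegzE; lia.
  by rewrite bin_small // addr0 mulr0.
rewrite subzn // -(bin_sub kn).
rewrite (eq_bigl (fun J : {set 'I_n} => #|J| == n - k)%N) => [|J]; last first.
  by apply/eqP/eqP; lia.
under eq_bigr do rewrite prodrXr.
by rewrite -e_even_sum_sign mulrC mulfK ?pnatr_eq0.
Qed.

Lemma coef_exp_1DX (R : nzRingType) n k : ((1 + 'X) ^+ n : {poly R})`_k = 'C(n, k)%:R.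
Proof.
elim: n k => [|n IHn] k; first by rewrite expr0 coef1 bin0n.
rewrite exprS mulrDl mul1r coefD coefXM IHn.
by case: k => [|k] /=; rewrite ?bin0 ?addr0 // IHn binS natrD addrC.
Qed.

Lemma Los_gt n k : (n < k)%N -> Los n k = 0%N.
Proof.
elim/nat_ind2: n k => [||n IHn] [|[|k]] //= ltnk.
by rewrite !IHn ?bin_small //; lia.
Qed.

Lemma coef_LosPoly n k : (LosPoly n)`_k = (Los n k)%:R.
Proof.
rewrite /LosPoly -(poly_def _ (fun i => (Los n i)%:R)) coef_poly.
by case: ltnP => // nk; rewrite Los_gt.
Qed.

Lemma LosPolySS n : LosPoly n.+2 = (1 + 'X^2) * LosPoly n + 'X * (1 + 'X) ^+ n.
Proof.
apply/polyP => k.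
rewrite coefD mulrDl mul1r coefD coefXnM coefXM !coef_LosPoly coef_exp_1DX.
case: k => [|[|k]] /=; rewrite ?natrD ?addr0 ?add0r ?addn0 //.
by rewrite subn2 addrAC.
Qed.

Lemma LosPoly_closed n :
  2%:R * LosPoly n = (1 + 'X) ^+ n + (1 + 'X^2) ^+ n./2 * (1 + 'X) ^+ odd n.
Proof.
elim/nat_ind2: n => [||n IHn].
- by rewrite /LosPoly big_ord1 scale1r /= expr0 mulr1 mul1r.
- rewrite /LosPoly !big_ord_recr big_ord0 /= !scale1r add0r expr1 expr0 mul1r.
  by ring.
rewrite LosPolySS /= negbK [(1 + 'X^2) ^+ _.+1]exprS.
rewrite [(1 + 'X) ^+ n.+2]exprS [(1 + 'X) ^+ n.+1]exprS.
have -> : 2%:R * ((1 + 'X^2) * LosPoly n + 'X * (1 + 'X) ^+ n) =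
  (1 + 'X^2) * (2%:R * LosPoly n) + 2%:R * 'X * (1 + 'X) ^+ n by ring.
by rewrite IHn; ring.
Qed.

Lemma LosPoly_comp_oppX n :
  2%:R * (LosPoly n \Po - 'X) =
  (1 - 'X) ^+ n + (1 + 'X^2) ^+ n./2 * (1 - 'X) ^+ odd n.
Proof.
have := congr1 (comp_poly (- 'X)) (LosPoly_closed n).
rewrite rmorphM rmorph_nat => ->.
by rewrite rmorphD rmorphM !rmorphXn !rmorphD !rmorph1 rmorphXn /= comp_polyX sqrrN.
Qed.

Lemma eq_upto_e_even_gf k N :
  eq_upto N (trunc N (fun n => (e_even n (n%:Z - k%:Z))%:R)
               * (1 - 'X) ^+ (k.+1 + odd k) * (1 + 'X^2) ^+ (k./2).+1)
    ('X^k * (LosPoly k.+2 \Po - 'X)).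
Proof.
set c : {poly rat} := (2^-1)%:P.
have c2 : c * 2%:R = 1 by rewrite -(rmorph_nat (@polyC rat)) -rmorphM mulVf.
set U := trunc N (fun n => 'C(n, k)%:R); set V := trunc N (fun n => (alt_prod n)`_k).
have -> : trunc N (fun n => (e_even n (n%:Z - k%:Z))%:R) = c * (U + V).
  apply/polyP => j; rewrite coefCM coefD !coef_poly.
  by case: ifP => _; rewrite ?e_even_alt_prod ?addr0 ?mulr0.
rewrite exprD.
set A := (1 - 'X) ^+ k.+1; set B := (1 + 'X^2) ^+ (k./2).+1; set D := (1 - 'X) ^+ odd k.
have -> : c * (U + V) * (A * D) * B = c * ((U * A) * (D * B) + (V * B) * (A * D)) by ring.
apply: eq_upto_trans (eq_uptoMl _ (eq_uptoD (eq_uptoMr _ (eq_upto_binomial_gf k))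
                                            (eq_uptoMr _ (eq_upto_alt_gf k)))) _.
have AD : (1 - 'X) ^+ (~~ odd k) * (A * D) = (1 - 'X) ^+ k.+2.
  by rewrite /A /D; case: odd; rewrite /= expr0 expr1 ?mulr1 ?mul1r -?exprS -?exprSr.
have := LosPoly_comp_oppX k.+2; rewrite /= negbK -/B -/D => L2.
suff -> : 'X^k * (LosPoly k.+2 \Po - 'X) =
  c * ('X^k * (D * B) + 'X^k * (1 - 'X) ^+ (~~ odd k) * (A * D)) by [].
rewrite -mulrA AD -mulrDr (mulrC D) addrC -L2.
by rewrite mulrCA [c * _]mulrA c2 mul1r.
Qed.

Lemma denominator_exponents k :
  (2 * ((k + 1) %/ 2) + 1 = k.+1 + odd k)%N /\ (k %/ 2 + 1 = (k./2).+1)%N.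
Proof.
rewrite !divn2 !addn1 /= uphalf_half; split=> //.
by have := odd_double_half k; rewrite -mul2n; lia.
Qed.

Theorem proposition3p4 (k : nat) :
  (fun n : nat => ((e_even n (n%:Z - k%:Z))%:R : rat)) =
  fps_mul
    (fps_of_poly ('X^k * (LosPoly k.+2 \Po (- 'X))))
    (fps_mul
       (fps_inv (fps_of_poly ((1 - 'X) ^+ (2 * ((k + 1) %/ 2) + 1)%N)))
       (fps_inv (fps_of_poly ((1 + 'X ^+ 2) ^+ (k %/ 2 + 1)%N)))).
Proof.
have [-> ->] := denominator_exponents k.
apply: fps_eq_mul_inv2 => [||N]; last exact: eq_upto_e_even_gf.
all: by rewrite -horner_coef0 !hornerE expr1n oner_neq0.
Qed.
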